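(* For all integers $k,\ell$, there is an existential first-order ($\Sigma_1$) formula $\varphi_{k,\ell}$, whose number of variables is bounded by a function of $k+\ell$, such that for every hypergraph $H=(X,E)$, $H$ satisfies $\varphi_{k,\ell}$ if and only if $(H,k,\ell)$ is a YES-instance of \textsc{Partial VC Dimension}. In particular, \textsc{Partial VC Dimension} is expressible in this way also in monadic second-order logic (MSOL).
   Context: A hypergraph $H=(X,E)$ consists of a finite vertex set $X$ and a collection $E$ of subsets of $X$; it is viewed as a relational structure whose universe is $X\cup E$, with unary predicates for $X$ and $E$ and the binary incidence (membership) relation between vertices and hyperedges. A $\Sigma_1$ formula is a first-order formula of the form $\exists y_1\cdots\exists y_m\,\psi$ with $\psi$ quantifier-free. For $C\subseteq X$, the number of equivalence classes induced by $C$ is $|\{e\cap C: e\in E\}|$. \textsc{Partial VC Dimension}: given $H=(X,E)$ and integers $k,\ell$, decide whether there is $C\subseteq X$ with $|C|=k$ inducing at least $\ell$ distinct equivalence classes. *)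

From mathcomp Require Import all_boot.
Set Implicit Arguments. Unset Strict Implicit. Unset Printing Implicit Defensive.

(* A hypergraph H = (X, E): X a finite vertex set, E a set of subsets of X. *)
(* Its relational structure has universe X ∪ E (disjoint union). *)
Definition universe (X : finType) (E : {set {set X}}) : Type :=
  (X + {S : {set X} | S \in E})%type.
Arguments universe : clear implicits.

Inductive qf (n : nat) : Type :=
  | QTrue : qf n
  | QFalse : qf n
  | QVtx : 'I_n -> qf n
  | QEdge : 'I_n -> qf n
  | QInc : 'I_n -> 'I_n -> qf n        (* vertex x belongs to hyperedge y *)
  | QEq : 'I_n -> 'I_n -> qf n
  | QNot : qf n -> qf n
  | QAnd : qf n -> qf n -> qf n
  | QOr : qf n -> qf n -> qf n.

Definition isVtx X E (u : universe X E) : Prop :=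
  match u with inl _ => True | inr _ => False end.
Definition isEdge X E (u : universe X E) : Prop :=
  match u with inl _ => False | inr _ => True end.
Definition incid X E (u w : universe X E) : Prop :=
  match u, w with
  | inl v, inr e => v \in sval e
  | _, _ => False
  end.

Fixpoint qf_eval X E n (a : 'I_n -> universe X E) (f : qf n) : Prop :=
  match f with
  | QTrue => True
  | QFalse => False
  | QVtx i => isVtx (a i)
  | QEdge i => isEdge (a i)
  | QInc i j => incid (a i) (a j)
  | QEq i j => a i = a j
  | QNot g => ~ qf_eval a g
  | QAnd g h => qf_eval a g /\ qf_eval a h
  | QOr g h => qf_eval a g \/ qf_eval a h
  end.

(* A Sigma_1 sentence  exists y_1 ... exists y_m, psi  with psi quantifier-free. *)
Definition sigma1 : Type := {m : nat & qf m}.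
Definition nvars (phi : sigma1) : nat := projT1 phi.
Definition sat X (E : {set {set X}}) (phi : sigma1) : Prop :=
  exists a : 'I_(projT1 phi) -> universe X E, qf_eval a (projT2 phi).

Definition pvc_yes (X : finType) (E : {set {set X}}) (k l : nat) : Prop :=
  exists C : {set X}, #|C| = k /\ l <= #|[set e :&: C | e in E]|.

(* The sentence guesses k vertices and l hyperedges: its matrix says that the
   first k variables are pairwise distinct vertices, the last l are hyperedges,
   and any two of these hyperedges are separated by one of the guessed vertices.
   Two hyperedges are separated by a vertex of C exactly when their traces on C
   differ, so a model of the sentence is a k-set C together with l hyperedges
   with pairwise distinct traces on C, i.e. a witness that C induces at least l
   classes.  The sentence has k + l variables. *)

From mathcomp Require Import all_boot.
From Stdlib Require Import Setoid.
Set Implicit Arguments. Unset Strict Implicit. Unset Printing Implicit Defensive.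

Section QuantifierFreeConnectives.
Variables (n : nat) (X : finType) (E : {set {set X}}) (a : 'I_n -> universe X E).

Definition qall (I : finType) (F : I -> qf n) : qf n := \big[@QAnd n/QTrue n]_(i : I) F i.
Definition qex (I : finType) (F : I -> qf n) : qf n := \big[@QOr n/QFalse n]_(i : I) F i.

Lemma qall_seq_eval (I : eqType) (r : seq I) (F : I -> qf n) :
  qf_eval a (\big[@QAnd n/QTrue n]_(i <- r) F i) <-> {in r, forall i, qf_eval a (F i)}.
Proof.
elim: r => [|i r IH]; first by rewrite big_nil.
rewrite big_cons /= IH; split=> [[Fi Fr] j | Fr]; last first.
  by split=> [|j jr]; apply: Fr; rewrite inE ?eqxx ?jr ?orbT.
by rewrite inE => /orP[/eqP-> | /Fr].
Qed.

Lemma qall_eval (I : finType) (F : I -> qf n) :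
  qf_eval a (qall F) <-> forall i, qf_eval a (F i).
Proof.
rewrite /qall qall_seq_eval; split=> Fi i //; exact: Fi (mem_index_enum i).
Qed.

Lemma qex_seq_eval (I : eqType) (r : seq I) (F : I -> qf n) :
  qf_eval a (\big[@QOr n/QFalse n]_(i <- r) F i) <-> exists2 i, i \in r & qf_eval a (F i).
Proof.
elim: r => [|i r IH]; first by rewrite big_nil; split=> // -[].
rewrite big_cons /= IH; split=> [[Fi | [j jr Fj]] | [j]].
- by exists i; rewrite ?inE ?eqxx.
- by exists j; rewrite ?inE ?jr ?orbT.
- by rewrite inE => /orP[/eqP-> | jr Fj]; [left | right; exists j].
Qed.

Lemma qex_eval (I : finType) (F : I -> qf n) :
  qf_eval a (qex F) <-> exists i, qf_eval a (F i).
Proof.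
rewrite /qex qex_seq_eval; split=> [[i] | [i]]; first by exists i.
by exists i; first exact: mem_index_enum.
Qed.

Definition qpairwise (I : finType) (R : I -> I -> qf n) : qf n :=
  qall (fun i => qall (fun j => if i == j then QTrue n else R i j)).

Arguments qpairwise : simpl never.

Lemma qpairwise_eval (I : finType) (R : I -> I -> qf n) :
  qf_eval a (qpairwise R) <-> forall i j, i != j -> qf_eval a (R i j).
Proof.
rewrite qall_eval; split=> Ra i => [j ij | ]; last apply/qall_eval => j.
  by move/qall_eval/(_ j): (Ra i); rewrite (negbTE ij).
by case: eqP => // /eqP; apply: Ra.
Qed.

Definition qdistinct (I : finType) (v : I -> 'I_n) : qf n :=
  qpairwise (fun i j => QNot (QEq (v i) (v j))).

Arguments qdistinct : simpl never.

Lemma qdistinct_eval (I : finType) (v : I -> 'I_n) :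
  qf_eval a (qdistinct v) <-> injective (a \o v).
Proof.
rewrite qpairwise_eval; split=> av i j => [eq_ij | ij /= eq_ij].
  by apply/eqP; apply: contraT => /av.
by move: ij; rewrite (av i j eq_ij) eqxx.
Qed.

Definition qsep (t e e' : 'I_n) : qf n :=
  QOr (QAnd (QInc t e) (QNot (QInc t e'))) (QAnd (QNot (QInc t e)) (QInc t e')).

Lemma qsep_eval (t e e' : 'I_n) y S S' :
  a t = inl y -> a e = inr S -> a e' = inr S' ->
  qf_eval a (qsep t e e') <-> (y \in sval S) != (y \in sval S').
Proof.
move=> /= -> -> ->; rewrite /incid.
by case: (y \in sval S); case: (y \in sval S'); intuition.
Qed.

End QuantifierFreeConnectives.

Lemma qf_eval_ext n X E (a b : 'I_n -> universe X E) (f : qf n) :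
  a =1 b -> qf_eval a f <-> qf_eval b f.
Proof.
move=> ab; elim: f => //= [i | i | i j | i j | g IH | g IHg h IHh | g IHg h IHh];
  by rewrite ?ab ?IH ?IHg ?IHh.
Qed.

Lemma leq_card_injP (T : finType) (A : {set T}) n :
  n <= #|A| <-> exists f : 'I_n -> T, injective f /\ forall i, f i \in A.
Proof.
split=> [le_nA | [f [f_inj fA]]].
  exists (fun i => enum_val (widen_ord le_nA i)); split=> [i j | i]; last exact: enum_valP.
  by move/enum_val_inj/(congr1 val) => /= /ord_inj.
rewrite -[n]card_ord -cardsT -(card_imset _ f_inj); apply: subset_leq_card.
by apply/subsetP => _ /imsetP[i _ ->].
Qed.

Lemma card_eq_imset_ord (T : finType) (C : {set T}) n :
  #|C| = n -> exists x : 'I_n -> T, injective x /\ x @: setT = C.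
Proof.
move=> cardC; have [|x [x_inj xC]] := (leq_card_injP C n).1; first by rewrite cardC.
exists x; split=> //; apply/eqP; rewrite eqEcard card_imset // cardsT card_ord cardC leqnn.
by rewrite andbT; apply/subsetP => _ /imsetP[i _ ->].
Qed.

Lemma eq_setI_imset (T I : finType) (A B : {set T}) (x : I -> T) :
  (A :&: x @: setT == B :&: x @: setT) = [forall t, (x t \in A) == (x t \in B)].
Proof.
apply/eqP/forallP => [eqAB t | eqAB].
  by move/setP/(_ (x t)): eqAB; rewrite !inE imset_f ?inE // !andbT => ->.
apply/setP => y; rewrite !inE.
by case: (boolP (y \in x @: setT)) => [/imsetP[t _ ->] | _]; rewrite ?andbF // !andbT; apply/eqP.
Qed.

Section PartialVCFormula.
Variables (X : finType) (E : {set {set X}}) (k l : nat).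
Local Notation edge := {e : {set X} | e \in E}.

Definition separating (x : 'I_k -> X) (S : 'I_l -> edge) : Prop :=
  forall j j', j != j' -> exists t, (x t \in sval (S j)) != (x t \in sval (S j')).

Definition assign (x : 'I_k -> X) (S : 'I_l -> edge) (m : 'I_(k + l)) : universe X E :=
  match split m with inl i => inl (x i) | inr j => inr (S j) end.

Lemma assign_lshift x S i : assign x S (lshift l i) = inl (x i).
Proof. by rewrite /assign (unsplitK (inl i)). Qed.

Lemma assign_rshift x S j : assign x S (rshift k j) = inr (S j).
Proof. by rewrite /assign (unsplitK (inr j)). Qed.

Definition pvc_matrix : qf (k + l) :=
  QAnd (qall (fun i => QVtx (lshift l i)))
 (QAnd (qall (fun j => QEdge (rshift k j)))
 (QAnd (qdistinct (lshift l))
       (qpairwise (fun j j' => qex (fun t => qsep (lshift l t) (rshift k j) (rshift k j')))))).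

Lemma pvc_matrix_assigned (a : 'I_(k + l) -> universe X E) :
  qf_eval a pvc_matrix -> exists x S, a =1 assign x S.
Proof.
rewrite /= !qall_eval => -[vtx [edg _]].
have /fin_all_exists[x ax] i : exists y, a (lshift l i) = inl y.
  by move: (vtx i) => /=; case: (a _) => // y _; exists y.
have /fin_all_exists[S aS] j : exists e, a (rshift k j) = inr e.
  by move: (edg j) => /=; case: (a _) => // e _; exists e.
exists x, S => m; rewrite -(splitK m).
by case: (split m) => [i | j] /=; rewrite ?assign_lshift ?assign_rshift ?ax ?aS.
Qed.

Lemma pvc_matrix_assign x S :
  qf_eval (assign x S) pvc_matrix <-> injective x /\ separating x S.
Proof.
rewrite /= qdistinct_eval qpairwise_eval !qall_eval.
have -> : injective (assign x S \o lshift l) <-> injective x.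
  split=> inj i j => [eq_ij | ]; first by apply: inj; rewrite /= !assign_lshift eq_ij.
  by rewrite /= !assign_lshift => -[] /inj.
have sepP j j' : qf_eval (assign x S) (qex (fun t => qsep (lshift l t) (rshift k j) (rshift k j')))
    <-> exists t, (x t \in sval (S j)) != (x t \in sval (S j')).
  rewrite qex_eval; split=> -[t sep]; exists t;
    by move: sep; rewrite (qsep_eval (assign_lshift x S t) (assign_rshift x S j) (assign_rshift x S j')).
split=> [[_ [_ [inj sep]]] | [inj sep]].
  by split=> // j j' /sep /sepP.
split=> [i | ]; first by rewrite /= assign_lshift.
split=> [j | ]; first by rewrite /= assign_rshift.
by split=> // j j' /sep /sepP.
Qed.

Definition pvc_formula : sigma1 := existT _ (k + l) pvc_matrix.

Lemma sat_pvc_formula : sat E pvc_formula <-> exists x S, injective x /\ separating x S.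
Proof.
split=> [[a /= a_sat] | [x [S xS]]]; last by exists (assign x S); apply/pvc_matrix_assign.
have [x [S eq_a]] := pvc_matrix_assigned a_sat.
by exists x, S; apply/pvc_matrix_assign; rewrite -(qf_eval_ext _ eq_a).
Qed.

Lemma separatingE x S :
  separating x S <-> injective (fun j => sval (S j) :&: x @: setT).
Proof.
split=> [sep j j' eq_j | inj j j' ne_j].
  apply/eqP/negPn/negP => /sep[t]; move/eqP: eq_j.
  by rewrite eq_setI_imset => /forallP/(_ t)/eqP ->; rewrite eqxx.
have : sval (S j) :&: x @: setT != sval (S j') :&: x @: setT.
  by apply: contra ne_j => /eqP/inj ->.
by rewrite eq_setI_imset negb_forall => /existsP[t ne_t]; exists t.
Qed.

Lemma pvc_yesP : pvc_yes E k l <-> exists x S, injective x /\ separating x S.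
Proof.
split=> [[C [cardC le_l]] | [x [S [x_inj sep]]]].
  case: (card_eq_imset_ord cardC) le_l => x [x_inj <-] le_l.
  have [tr [tr_inj trE]] := (leq_card_injP _ l).1 le_l.
  have /fin_all_exists[S trS] j : exists e : edge, sval e :&: x @: setT = tr j.
    by have /imsetP[e Ee ->] := trE j; exists (exist _ e Ee).
  exists x, S; split=> //; apply/separatingE => j j'.
  by rewrite !trS => /tr_inj.
exists (x @: setT); split; first by rewrite card_imset // cardsT card_ord.
apply/leq_card_injP; exists (fun j => sval (S j) :&: x @: setT).
by split=> [|j]; [apply/separatingE | exact/imset_f/(svalP (S j))].
Qed.

End PartialVCFormula.

Theorem proposition1 :
  exists f : nat -> nat, forall k l : nat,
    exists phi : sigma1, nvars phi <= f (k + l) /\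
      forall (X : finType) (E : {set {set X}}), sat E phi <-> pvc_yes E k l.
Proof.
exists id => k l; exists (pvc_formula k l); split=> // X E.
by rewrite sat_pvc_formula pvc_yesP.
Qed.
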